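(* Let $\mathfrak g$ be a finite-dimensional nilpotent Lie algebra over a field $k$ of characteristic zero. If $\mathfrak g$ admits an LR-structure, then $\mathfrak g$ also admits a complete LR-structure.
   Context: An LR-algebra is a vector space $A$ with a bilinear product $\cdot$ satisfying $x\cdot(y\cdot z)=y\cdot(x\cdot z)$ and $(x\cdot y)\cdot z=(x\cdot z)\cdot y$ for all $x,y,z\in A$. An LR-structure on a Lie algebra $\mathfrak g$ is an LR-algebra product $\cdot$ on the underlying vector space of $\mathfrak g$ such that $x\cdot y-y\cdot x=[x,y]$ for all $x,y$. With $R(x)y=y\cdot x$, an LR-structure is called complete if $R(x)$ is nilpotent for every $x$. *)

From HB Require Import structures.
From mathcomp Require Import all_boot all_order all_algebra.
Set Implicit Arguments. Unset Strict Implicit. Unset Printing Implicit Defensive.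
Import GRing.Theory.
Local Open Scope ring_scope.

Definition bilinear_op (k : fieldType) (V : vectType k) (f : V -> V -> V) : Prop :=
  (forall (a : k) (x y z : V), f (a *: x + y) z = a *: f x z + f y z) /\
  (forall (a : k) (x y z : V), f x (a *: y + z) = a *: f x y + f x z).

Definition is_lie_bracket (k : fieldType) (V : vectType k) (br : V -> V -> V) : Prop :=
  [/\ bilinear_op br,
      (forall x : V, br x x = 0) &
      (forall x y z : V, br x (br y z) + br y (br z x) + br z (br x y) = 0)].

(* Lower central series: lcs br 0 = g, lcs br (i+1) = [g, lcs br i]
   (the linear span of the brackets [x, y] with y in lcs br i). *)
Inductive lcs (k : fieldType) (V : vectType k) (br : V -> V -> V) : nat -> V -> Prop :=
  | lcs_all : forall x, lcs br 0 x
  | lcs_br : forall i x y, lcs br i y -> lcs br i.+1 (br x y)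
  | lcs_0 : forall i, lcs br i.+1 0
  | lcs_add : forall i u v, lcs br i.+1 u -> lcs br i.+1 v -> lcs br i.+1 (u + v)
  | lcs_scale : forall i (a : k) u, lcs br i.+1 u -> lcs br i.+1 (a *: u).

Definition lie_nilpotent (k : fieldType) (V : vectType k) (br : V -> V -> V) : Prop :=
  exists m : nat, forall x : V, lcs br m x -> x = 0.

Definition is_LR_algebra (k : fieldType) (V : vectType k) (p : V -> V -> V) : Prop :=
  [/\ bilinear_op p,
      (forall x y z : V, p x (p y z) = p y (p x z)) &
      (forall x y z : V, p (p x y) z = p (p x z) y)].

Definition is_LR_structure (k : fieldType) (V : vectType k)
    (br : V -> V -> V) (p : V -> V -> V) : Prop :=
  is_LR_algebra p /\ (forall x y : V, p x y - p y x = br x y).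

Definition Rmul (k : fieldType) (V : vectType k) (p : V -> V -> V) (x : V) : V -> V :=
  fun y => p y x.

Definition LR_complete (k : fieldType) (V : vectType k) (p : V -> V -> V) : Prop :=
  forall x : V, exists n : nat, forall y : V, iter n (Rmul p x) y = 0.

From HB Require Import structures.
From mathcomp Require Import all_boot all_order all_algebra.
Import GRing.Theory.
Local Open Scope ring_scope.
Set Implicit Arguments. Unset Strict Implicit. Unset Printing Implicit Defensive.

(* The proof modifies a given LR-product [p] one basis vector at a time.  For
   c in V let t = R(c) and let V = V0 (+) V1 be the Fitting decomposition of t
   (V0 = ker t^N, V1 = im t^N, N > dim V), with projection pr0 onto V0.  The
   modified product  x o y = x . pr0(y)  is again an LR-product with the same
   commutator, hence the same Lie bracket.  Its right multiplications R'(y)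
   act on V0 like R(y) and on V1 like -ad(pr0 y), which is nilpotent because
   the Lie algebra is.  Hence R'(c) is nilpotent, and R'(y) stays nilpotent
   whenever R(y) was.  Running through a basis yields a product for which all
   basis vectors have nilpotent right multiplication; since the R(x) commute
   and depend linearly on x, every R(x) is then nilpotent. *)

Section Fitting.
Variables (k : fieldType) (V : vectType k) (t : 'End(V)).

(* The m-th power of t, as a linear map so that its kernel and image exist. *)
Definition lfun_pow (m : nat) : 'End(V) := iter m (comp_lfun t) \1%VF.

Lemma lfun_powE m x : lfun_pow m x = iter m t x.
Proof.
by elim: m => [|m IHm] /=; rewrite ?id_lfunE // comp_lfunE -IHm.
Qed.

Lemma iter_lfun0 m : iter m t 0 = 0.
Proof. by rewrite -lfun_powE linear0. Qed.

Lemma ker_pow_sub m : (lker (lfun_pow m) <= lker (lfun_pow m.+1))%VS.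
Proof.
by apply/subvP=> x; rewrite !memv_ker !lfun_powE /= => /eqP ->; rewrite linear0.
Qed.

Lemma dim_ker_pow_grows m :
  (forall i, (i < m)%N -> ~~ (lker (lfun_pow i.+1) <= lker (lfun_pow i))%VS) ->
  (m <= \dim (lker (lfun_pow m)))%N.
Proof.
elim: m => [|m IHm] // grows.
apply: leq_ltn_trans (IHm (fun i lt_im => grows i (ltnW lt_im))) _.
by rewrite (ltn_leqif (dimv_leqif_sup (ker_pow_sub m))) grows.
Qed.

Lemma ker_pow_stop :
  exists2 j, (j <= \dim {:V})%N & (lker (lfun_pow j.+1) <= lker (lfun_pow j))%VS.
Proof.
have [/existsP[j stop_j]|] :=
  boolP [exists j : 'I_(\dim {:V}).+1, (lker (lfun_pow j.+1) <= lker (lfun_pow j))%VS].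
  by exists j; rewrite // -ltnS ltn_ord.
rewrite negb_exists => /forallP grows.
have := dim_ker_pow_grows (fun i lt_i => grows (Ordinal lt_i)).
by rewrite ltnNge dimvS ?subvf.
Qed.

Lemma ker_pow_stable j m z : (lker (lfun_pow j.+1) <= lker (lfun_pow j))%VS ->
  iter (j + m) t z = 0 -> iter j t z = 0.
Proof.
move=> stop; elim: m z => [|m IHm] z; first by rewrite addn0.
rewrite addnS iterSr => /IHm; rewrite -iterSr => /eqP.
rewrite -lfun_powE -memv_ker => /(subvP stop).
by rewrite memv_ker lfun_powE => /eqP.
Qed.

Lemma iter_stable a b z :
  (\dim {:V} <= a)%N -> iter (a + b) t z = 0 -> iter a t z = 0.
Proof.
have [j le_j_dim stop] := ker_pow_stop => le_dim_a.
rewrite -(subnKC (leq_trans le_j_dim le_dim_a)) -addnA => /(ker_pow_stable stop).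
by rewrite addnC iterD => ->; rewrite iter_lfun0.
Qed.

Lemma iter_inj_img a b z :
  (\dim {:V} <= a)%N -> iter b t (iter a t z) = 0 -> iter a t z = 0.
Proof. by move=> le_dim_a; rewrite -iterD addnC; apply: iter_stable. Qed.

Variable N : nat.
Hypothesis le_dim_N : (\dim {:V} <= N)%N.

(* The Fitting components: t is nilpotent on fitting0 and bijective on fitting1. *)
Definition fitting0 : {vspace V} := lker (lfun_pow N).
Definition fitting1 : {vspace V} := limg (lfun_pow N).

Lemma mem_fitting0 x : (x \in fitting0) = (iter N t x == 0).
Proof. by rewrite memv_ker lfun_powE. Qed.

Lemma mem_fitting1 x : reflect (exists w, x = iter N t w) (x \in fitting1).
Proof.
apply: (iffP memv_imgP) => [[w _ ->]|[w ->]]; exists w; rewrite ?lfun_powE //.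
by rewrite memvf.
Qed.

Lemma fitting_cap : (fitting0 :&: fitting1 = 0)%VS.
Proof.
apply/eqP; rewrite -subv0; apply/subvP => x /memv_capP[].
rewrite mem_fitting0 memv0 => /eqP t_x0 /mem_fitting1[w def_x].
by rewrite def_x (iter_inj_img (b := N)) // -def_x.
Qed.

Lemma fitting_sum : (fitting0 + fitting1 = fullv)%VS.
Proof.
apply/eqP; rewrite eqEdim subvf /= -(leq_add2r (\dim (fitting0 :&: fitting1))).
rewrite dimv_sum_cap fitting_cap dimv0 addn0.
by rewrite -(limg_ker_dim (lfun_pow N) fullv) capfv addnC.
Qed.

Definition fitting_proj0 : 'End(V) := daddv_pi fitting0 fitting1.
Definition fitting_proj1 : 'End(V) := daddv_pi fitting1 fitting0.

Lemma fitting_proj_add x : fitting_proj0 x + fitting_proj1 x = x.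
Proof. by apply: daddv_pi_add; rewrite ?fitting_cap ?fitting_sum ?memvf. Qed.

Lemma fitting_proj0_add u v :
  u \in fitting0 -> v \in fitting1 -> fitting_proj0 (u + v) = u.
Proof.
move=> Fu Fv; rewrite linearD /= (daddv_pi_id fitting_cap Fu).
suff -> : fitting_proj0 v = 0 by rewrite addr0.
have := fitting_proj_add v.
rewrite /fitting_proj1 (@daddv_pi_id _ _ fitting1 fitting0 v) ?(capvC fitting1) ?fitting_cap //.
by move/(canRL (addrK v)); rewrite subrr.
Qed.
End Fitting.

Section Bilinear.
Variables (k : fieldType) (V : vectType k) (f : V -> V -> V).
Hypothesis f_bilin : bilinear_op f.

Definition bilin_left (z : V) : {linear V -> V} :=
  HB.pack (fun x => f x z) (GRing.isLinear.Build _ _ _ _ (fun x => f x z)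
    (fun a x y => f_bilin.1 a x y z)).

Definition bilin_right (x : V) : {linear V -> V} :=
  HB.pack (f x) (GRing.isLinear.Build _ _ _ _ (f x) (fun a y z => f_bilin.2 a x y z)).

Lemma bilinDl x y z : f (x + y) z = f x z + f y z.
Proof. exact: (linearD (bilin_left z)). Qed.

Lemma bilinDr x y z : f x (y + z) = f x y + f x z.
Proof. exact: (linearD (bilin_right x)). Qed.

Lemma bilinBr x y z : f x (y - z) = f x y - f x z.
Proof. exact: (linearB (bilin_right x)). Qed.

Lemma bilinZl a x z : f (a *: x) z = a *: f x z.
Proof. exact: (linearZ_LR (bilin_left z)). Qed.

Lemma bilinZr a x z : f x (a *: z) = a *: f x z.
Proof. exact: (linearZ_LR (bilin_right x)). Qed.

Lemma bilin0l z : f 0 z = 0.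
Proof. exact: (linear0 (bilin_left z)). Qed.

Lemma bilin0r x : f x 0 = 0.
Proof. exact: (linear0 (bilin_right x)). Qed.

Lemma linfun_bilin_left z : linfun (fun x => f x z) =1 (fun x => f x z).
Proof. exact: (lfunE (bilin_left z)). Qed.
End Bilinear.

Section IterAdditive.
Variables (V : zmodType) (h : V -> V).
Hypothesis hD : forall x y, h (x + y) = h x + h y.

Lemma iter_additive n x y : iter n h (x + y) = iter n h x + iter n h y.
Proof. by elim: n x y => [|n IHn] x y //=; rewrite IHn hD. Qed.

Lemma iter_additive0 n : iter n h 0 = 0.
Proof. by apply: (addIr (iter n h 0)); rewrite -iter_additive !add0r. Qed.
End IterAdditive.

Section CommutingNilpotent.
Variables (V : zmodType) (f g : V -> V).
Hypotheses (fD : forall x y, f (x + y) = f x + f y)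
           (gD : forall x y, g (x + y) = g x + g y)
           (fg_comm : forall x, f (g x) = g (f x)).

Definition killed_by a b x :=
  forall i j, ((a <= i) || (b <= j))%N -> iter i f (iter j g x) = 0.

(* Expanding (f + g)^(a+b) x one factor at a time: each step lowers a or b. *)
Lemma killed_by_sum n a b x :
  (a + b)%N = n -> killed_by a b x -> iter n (fun z => f z + g z) x = 0.
Proof.
set h := fun z => f z + g z.
have hD y z : h (y + z) = h y + h z by rewrite /h fD gD addrACA.
have g_f j y : iter j g (f y) = f (iter j g y).
  by elim: j => [|j IHj] //=; rewrite IHj fg_comm.
elim: n a b x => [|n IHn] a b x sum_ab x_killed.
  apply: (x_killed 0%N 0%N); rewrite !leqn0.
  by move: sum_ab => /eqP; rewrite addn_eq0 => /andP[->].
(* If a or b is zero, then x = f^0 g^0 x is itself zero. *)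
case: a b sum_ab x_killed => [|a] [|b] sum_ab x_killed;
  try by have /= -> := x_killed 0%N 0%N isT; exact: iter_additive0 hD n.+1.
rewrite iterSr (iter_additive hD) (IHn a b.+1) ?(IHn a.+1 b) ?addr0 //.
- by move: sum_ab; rewrite addnS => -[].
- by move=> i j le_ij; rewrite -iterSr x_killed.
- by move: sum_ab; rewrite addSn => -[].
- by move=> i j le_ij; rewrite g_f -iterSr x_killed.
Qed.

Lemma nilpotent_sum a b :
  (forall x, iter a f x = 0) -> (forall x, iter b g x = 0) ->
  forall x, iter (a + b) (fun z => f z + g z) x = 0.
Proof.
move=> f_nil g_nil x; apply: (killed_by_sum (a := a) (b := b)) => // i j /orP[].
  by move/subnK <-; rewrite iterD f_nil (iter_additive0 fD).
by move/subnK <-; rewrite iterD g_nil !(iter_additive0 gD, iter_additive0 fD).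
Qed.
End CommutingNilpotent.

Definition R_nilpotent (k : fieldType) (V : vectType k) (p : V -> V -> V) (y : V) : Prop :=
  exists n, forall x, iter n (Rmul p y) x = 0.

Section LRAlgebra.
Variables (k : fieldType) (V : vectType k) (p : V -> V -> V).
Hypothesis p_LR : is_LR_algebra p.

Let p_bilin : bilinear_op p. Proof. by case: p_LR. Qed.

(* Right multiplications commute: this is the identity (z.y).x = (z.x).y. *)
Lemma Rmul_comm x y z : Rmul p x (Rmul p y z) = Rmul p y (Rmul p x z).
Proof. by case: p_LR => _ _ p_rcomm; rewrite /Rmul p_rcomm. Qed.

Lemma R_nilpotentZ a y : R_nilpotent p y -> R_nilpotent p (a *: y).
Proof.
move=> [n y_nil]; exists n => x.
suff -> : iter n (Rmul p (a *: y)) x = a ^+ n *: iter n (Rmul p y) x.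
  by rewrite y_nil scaler0.
elim: n {y_nil} => [|n IHn]; first by rewrite scale1r.
by rewrite !iterS IHn /Rmul bilinZl // bilinZr // scalerA exprSr.
Qed.

Lemma R_nilpotentD x y : R_nilpotent p x -> R_nilpotent p y -> R_nilpotent p (x + y).
Proof.
move=> [a x_nil] [b y_nil]; exists (a + b)%N => z.
have -> : iter (a + b) (Rmul p (x + y)) z =
          iter (a + b) (fun u => Rmul p x u + Rmul p y u) z.
  by apply: eq_iter => u; rewrite /Rmul bilinDr.
have RD w u v : Rmul p w (u + v) = Rmul p w u + Rmul p w v by rewrite /Rmul bilinDl.
by apply: nilpotent_sum => //; apply: Rmul_comm.
Qed.

Lemma LR_complete_vbasis :
  (forall c, c \in vbasis fullv -> R_nilpotent p c) -> LR_complete p.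
Proof.
move=> basis_nil y; rewrite (coord_vbasis (memvf y)).
apply: (big_ind (R_nilpotent p)) => [|x z|i _].
- by exists 1%N => x; rewrite /= /Rmul bilin0r.
- exact: R_nilpotentD.
- by apply/R_nilpotentZ/basis_nil/mem_nth; rewrite size_tuple.
Qed.
End LRAlgebra.

Section FittingModification.
Variables (k : fieldType) (V : vectType k) (p : V -> V -> V) (c : V).
Hypothesis p_LR : is_LR_algebra p.

Let p_bilin : bilinear_op p. Proof. by case: p_LR. Qed.
Let p_lcomm x y z : p x (p y z) = p y (p x z). Proof. by case: p_LR. Qed.
Let p_rcomm x y z : p (p x y) z = p (p x z) y. Proof. by case: p_LR. Qed.

Definition right_mul_end : 'End(V) := linfun (Rmul p c).

Definition fitting_product (x y : V) : V :=
  p x (fitting_proj0 right_mul_end (\dim {:V}).+1 y).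

Local Notation t := right_mul_end.
Local Notation N := (\dim {:V}).+1.
Local Notation F0 := (fitting0 t N).
Local Notation F1 := (fitting1 t N).
Local Notation pr0 := (fitting_proj0 t N).
Local Notation pr1 := (fitting_proj1 t N).

Let le_dim_N : (\dim {:V} <= N)%N := leqnSn _.
Let proj_add x : pr0 x + pr1 x = x := fitting_proj_add t le_dim_N x.

Lemma right_mul_endE x : t x = p x c.
Proof. exact: linfun_bilin_left. Qed.

Lemma right_mul_mull x y : t (p x y) = p (t x) y.
Proof. by rewrite !right_mul_endE p_rcomm. Qed.

Lemma iter_right_mul m x y : iter m t (p x y) = p (iter m t x) y.
Proof. by elim: m => [|m IHm] //=; rewrite IHm right_mul_mull. Qed.

Lemma mul_right_mulC x y : p x (t y) = p y (t x).
Proof. by rewrite !right_mul_endE p_lcomm. Qed.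

Lemma mul_iter_right_mul m u w : p u (iter m.+1 t w) = iter m t (p u (t w)).
Proof.
elim: m => [|m IHm] //.
rewrite iterS mul_right_mulC iterS -right_mul_mull [p (iter m t w) _]mul_right_mulC.
by rewrite -iterS IHm.
Qed.

Lemma fitting0_mull u z : u \in F0 -> p u z \in F0.
Proof. by rewrite !mem_fitting0 iter_right_mul => /eqP ->; rewrite bilin0l. Qed.

Lemma fitting1_mull v z : v \in F1 -> p v z \in F1.
Proof.
by case/mem_fitting1 => w ->; apply/mem_fitting1; exists (p w z); rewrite iter_right_mul.
Qed.

(* V0 . V1 = 0: u.v lies in both components. *)
Lemma fitting0_mul_fitting1 u v : u \in F0 -> v \in F1 -> p u v = 0.
Proof.
rewrite mem_fitting0 => /eqP t_u0 /mem_fitting1[w ->].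
rewrite mul_iter_right_mul (iter_inj_img (b := N)) //.
by rewrite -mul_iter_right_mul iter_right_mul t_u0 bilin0l.
Qed.

Lemma fitting1_mulC v w : v \in F1 -> w \in F1 -> p v w = p w v.
Proof.
case/mem_fitting1 => a -> /mem_fitting1[b ->].
by rewrite !iterS -right_mul_mull mul_right_mulC right_mul_mull.
Qed.

Lemma fitting_proj0E x : pr0 x = x - pr1 x.
Proof. by rewrite -{2}(proj_add x) addrK. Qed.

(* pr0 commutes with right multiplications, both components being right ideals. *)
Lemma proj0_mull x z : pr0 (p x z) = p (pr0 x) z.
Proof.
rewrite -{1}(proj_add x) bilinDl // (fitting_proj0_add le_dim_N) //.
  by apply: fitting0_mull; apply: memv_pi.
by apply: fitting1_mull; apply: memv_pi.
Qed.

Lemma mul_fitting0 x a b : a \in F0 -> b \in F0 -> p x (p a b) = p (pr0 x) (p a b).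
Proof.
move=> F0a F0b; rewrite p_lcomm -{1}(proj_add x) bilinDl // bilinDr //.
rewrite [p a (p (pr1 x) b)]fitting0_mul_fitting1 ?fitting1_mull ?memv_pi // addr0.
exact: p_lcomm.
Qed.

Lemma mul_proj1C x y : p x (pr1 y) = p y (pr1 x).
Proof.
suff mul_proj1 u v : p u (pr1 v) = p (pr1 u) (pr1 v).
  by rewrite mul_proj1 fitting1_mulC ?memv_pi // -mul_proj1.
rewrite -{1}(proj_add u) bilinDl // fitting0_mul_fitting1 ?memv_pi //.
by rewrite add0r.
Qed.

Lemma fitting_product_LR : is_LR_algebra fitting_product.
Proof.
rewrite /fitting_product; split.
- split=> a x y z; first exact: p_bilin.1.
  by rewrite linearP bilinDr // bilinZr.
- move=> x y z; rewrite !proj0_mull (mul_fitting0 x) ?memv_pi //.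
  by rewrite (mul_fitting0 y) ?memv_pi // p_lcomm.
- by move=> x y z; rewrite p_rcomm.
Qed.

Lemma fitting_product_commutator x y :
  fitting_product x y - fitting_product y x = p x y - p y x.
Proof.
rewrite /fitting_product !fitting_proj0E !bilinBr // mul_proj1C.
by rewrite opprB addrA subrK.
Qed.

Let fp_bilin : bilinear_op fitting_product. Proof. by case: fitting_product_LR. Qed.

Lemma Rmul_fitting_product_fitting0 y u :
  u \in F0 -> Rmul fitting_product y u = Rmul p y u.
Proof.
move=> F0u; rewrite /Rmul /fitting_product fitting_proj0E bilinBr //.
by rewrite [p u (pr1 y)](fitting0_mul_fitting1 F0u) ?memv_pi // subr0.
Qed.

Lemma iter_fitting_product_fitting0 y m u :
  u \in F0 -> iter m (Rmul fitting_product y) u = iter m (Rmul p y) u.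
Proof.
move=> F0u; have F0_iter n : iter n (Rmul p y) u \in F0.
  by elim: n => //= n IHn; apply: fitting0_mull.
by elim: m => //= m ->; rewrite Rmul_fitting_product_fitting0.
Qed.

Section Nilpotency.
Variable br : V -> V -> V.
Hypotheses (p_br : forall x y, p x y - p y x = br x y) (br_nil : lie_nilpotent br).

Lemma Rmul_fitting_product_fitting1 y v :
  v \in F1 -> Rmul fitting_product y v = - br (pr0 y) v.
Proof.
move=> F1v; rewrite /Rmul /fitting_product -p_br.
by rewrite (fitting0_mul_fitting1 _ F1v) ?memv_pi // sub0r opprK.
Qed.

Lemma lcs_iter_fitting_product y m v :
  v \in F1 -> lcs br m (iter m (Rmul fitting_product y) v).
Proof.
move=> F1v; have F1_iter n : iter n (Rmul fitting_product y) v \in F1.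
  by elim: n => //= n IHn; apply: fitting1_mull.
elim: m => [|m IHm] /=; first exact: lcs_all.
rewrite Rmul_fitting_product_fitting1 // -scaleN1r.
by apply: lcs_scale; apply: lcs_br.
Qed.

Lemma fitting_product_R_nilpotent y A :
  (forall u, u \in F0 -> iter A (Rmul p y) u = 0) -> R_nilpotent fitting_product y.
Proof.
move=> y_nil; have [M lcs_M_eq0] := br_nil; exists (M + A)%N => x.
have RD u v : Rmul fitting_product y (u + v) =
              Rmul fitting_product y u + Rmul fitting_product y v.
  by rewrite /Rmul bilinDl.
have x0_nil : iter (M + A) (Rmul fitting_product y) (pr0 x) = 0.
  rewrite iterD [iter A _ _]iter_fitting_product_fitting0 ?memv_pi //.
  rewrite y_nil ?memv_pi //.
  exact: iter_additive0.
have x1_nil : iter (M + A) (Rmul fitting_product y) (pr1 x) = 0.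
  rewrite addnC iterD (lcs_M_eq0 _ (lcs_iter_fitting_product _ _ _)) ?memv_pi //.
  exact: iter_additive0.
by rewrite -(proj_add x) iter_additive // x0_nil x1_nil addr0.
Qed.

Lemma fitting_product_R_nilpotent_c : R_nilpotent fitting_product c.
Proof.
apply: (fitting_product_R_nilpotent (A := N)) => u; rewrite mem_fitting0 => /eqP <-.
by apply: eq_iter => v; rewrite right_mul_endE.
Qed.

Lemma fitting_product_R_nilpotent_of y : R_nilpotent p y -> R_nilpotent fitting_product y.
Proof. by case=> A y_nil; apply: (fitting_product_R_nilpotent (A := A)) => u _. Qed.
End Nilpotency.
End FittingModification.

Lemma LR_structure_R_nilpotent_seq (k : fieldType) (V : vectType k)
    (br p : V -> V -> V) (s : seq V) :
  is_LR_structure br p -> lie_nilpotent br ->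
  exists q, is_LR_structure br q /\ {in s, forall c, R_nilpotent q c}.
Proof.
move=> p_LRS br_nil; elim: s => [|c s [q [[q_LR q_br] s_nil]]]; first by exists p.
have q'_br x y : fitting_product q c x y - fitting_product q c y x = br x y.
  by rewrite fitting_product_commutator.
exists (fitting_product q c); split; first by split=> //; apply: fitting_product_LR.
move=> d; rewrite inE => /predU1P[-> | d_s].
  exact: (@fitting_product_R_nilpotent_c _ _ q c q_LR br q_br br_nil).
exact: (@fitting_product_R_nilpotent_of _ _ q c q_LR br q_br br_nil d (s_nil d d_s)).
Qed.

Theorem mainTheorem3 (k : fieldType) (V : vectType k) (br : V -> V -> V) :
  [pchar k] =i pred0 ->
  is_lie_bracket br ->
  lie_nilpotent br ->
  (exists p : V -> V -> V, is_LR_structure br p) ->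
  exists p : V -> V -> V, is_LR_structure br p /\ LR_complete p.
Proof.
move=> _ _ br_nil [p p_LRS].
have [q [q_LRS basis_nil]] := LR_structure_R_nilpotent_seq (vbasis fullv) p_LRS br_nil.
exists q; split=> //; apply: LR_complete_vbasis basis_nil.
by case: q_LRS.
Qed.
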